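(* For every $n\geq 2$, let $D_n^2$ be the random variable that chooses independently a pair of trees $T,T'\in\mathcal{T}_n$ and computes $d_{\varphi,2}(T,T')^2$. Under the Yule model its expected value is $$E_Y(D_n^2)=\frac{2n}{n-1}\big(3n^2-10n-1+8(n+1)H_n-4(n+1)H_n^2\big),$$ where $H_n=\sum_{i=1}^n 1/i$ is the $n$-th harmonic number.
   Context: A phylogenetic tree with $n$ leaves is a fully resolved (binary) rooted tree, viewed as a directed graph with arcs pointing away from the root, whose leaves are bijectively labeled by $\{1,\dots,n\}$; $\mathcal{T}_n$ denotes the set of all such trees (up to isomorphism preserving labels). The depth $\delta_T(v)$ of a node $v$ is the number of arcs from the root to $v$. For leaves $i\neq j$, the cophenetic value $\varphi_T(i,j)$ is the depth of the lowest common ancestor of $i$ and $j$; also $\varphi_T(i,i)=\delta_T(i)$. The euclidean cophenetic metric is $d_{\varphi,2}(T_1,T_2)=\sqrt{\sum_{1\le i\le j\le n}(\varphi_{T_1}(i,j)-\varphi_{T_2}(i,j))^2}$. The Yule model gives $T\in\mathcal{T}_n$ probability $P_Y(T)=\frac{2^{n-1}}{n!}\prod_{v}\frac{1}{\ell_T(v)-1}$, the product over internal nodes $v$ of $T$, with $\ell_T(v)$ the number of leaves descending from $v$. The two trees are chosen independently, each with probability $P_Y$. *)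

From HB Require Import structures.
From mathcomp Require Import all_boot all_order all_algebra.
Set Implicit Arguments. Unset Strict Implicit. Unset Printing Implicit Defensive.
Import Order.TTheory GRing.Theory Num.Theory.
Local Open Scope ring_scope.

(* A phylogenetic tree on the leaf set 'I_n (labels 0..n-1 stand for 1..n),
   taken up to label-preserving isomorphism, is encoded by its set of
   clusters: each node v is identified with the set of leaves below v.
   [is_phylo H] says H is the cluster set of a fully resolved rooted tree:
   it contains the root cluster (all leaves) and every leaf {i}, no empty
   set, it is laminar (any two clusters are nested or disjoint), and every
   non-singleton cluster (= internal node) is the disjoint union of two
   clusters (its two children). *)
Definition laminar n (H : {set {set 'I_n}}) : bool :=
  [forall A in H, forall B in H,
     [|| A \subset B, B \subset A | [disjoint A & B]]].

Definition is_phylo n (H : {set {set 'I_n}}) : bool :=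
  [&& [set: 'I_n] \in H, [forall i : 'I_n, [set i] \in H],
      set0 \notin H, laminar H &
      [forall A in H, (1 < #|A|)%N ==>
         [exists B in H, exists C in H,
            [&& B :|: C == A, [disjoint B & C], B != set0 & C != set0]]]].

Definition phylo_trees n : {set {set {set 'I_n}}} := [set H | is_phylo H].

(* depth of a node C = number of arcs from the root = number of proper
   ancestors of C. *)
Definition depth n (H : {set {set 'I_n}}) (C : {set 'I_n}) : nat :=
  #|[set D in H | C \proper D]|.

Definition lca n (H : {set {set 'I_n}}) (i j : 'I_n) : {set 'I_n} :=
  \bigcap_(D in H | (i \in D) && (j \in D)) D.

Definition coph n (H : {set {set 'I_n}}) (i j : 'I_n) : nat := depth H (lca H i j).

Definition dphi2 (R : rcfType) n (H1 H2 : {set {set 'I_n}}) : R :=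
  Num.sqrt (\sum_(i : 'I_n) \sum_(j : 'I_n | (i <= j)%N)
              ((coph H1 i j)%:R - (coph H2 i j)%:R) ^+ 2).

Definition yule (R : rcfType) n (H : {set {set 'I_n}}) : R :=
  (2 ^ (n - 1))%:R / (n`!)%:R * \prod_(C in H | (1 < #|C|)%N) ((#|C| - 1)%:R)^-1.

Definition EY_D2 (R : rcfType) n : R :=
  \sum_(T in phylo_trees n) \sum_(T' in phylo_trees n)
     yule R T * yule R T' * (dphi2 R T T') ^+ 2.

Definition harmonic (R : rcfType) n : R := \sum_(1 <= i < n.+1) (i%:R)^-1.

(* Fix a leaf i of a leaf set S with |S| >= 2.  A tree on S is the same thing as a choice
   of the root child A containing i, a tree on A and a tree on S \ A (grafting them under a
   new root).  Under this bijection the Yule weight factors as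
   2 |A|! (|S| - |A|)! / (|S|! (|S| - 1)) times the weights of the two subtrees, cophenetic
   values of leaves in A go up by one and those of leaves split by the root become 0.  Summing
   over A therefore gives recurrences in |S| for the Yule moments E[phi(i,j)] and
   E[phi(i,j)^2], which are solved by closed forms in the harmonic numbers H_s and H_s^(2).
   Since the two trees are independent, E[(phi_T(i,j) - phi_T'(i,j))^2] = 2 Var phi(i,j);
   summing over the n diagonal and n(n-1)/2 off-diagonal pairs, the H^(2) terms cancel. *)

From HB Require Import structures.
From mathcomp Require Import all_boot all_order all_algebra.
From mathcomp Require Import ring zify.
Set Implicit Arguments. Unset Strict Implicit. Unset Printing Implicit Defensive.
Import Order.TTheory GRing.Theory Num.Theory.
Local Open Scope ring_scope.

Section TreesOnLeafSets.

Variable n : nat.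
Implicit Types (S A B D X : {set 'I_n}) (H : {set {set 'I_n}}) (i j : 'I_n).

Definition tree_on S H : bool :=
  [&& S \in H, [forall i in S, [set i] \in H], set0 \notin H,
      [forall A in H, A \subset S], laminar H &
      [forall A in H, (1 < #|A|)%N ==>
         [exists B in H, exists C in H,
            [&& B :|: C == A, [disjoint B & C], B != set0 & C != set0]]]].

Record tree_spec S H : Prop := TreeSpec {
  tree_root : S \in H;
  tree_leaf : forall i, i \in S -> [set i] \in H;
  tree_set0 : set0 \notin H;
  tree_sub : forall A, A \in H -> A \subset S;
  tree_laminar : forall A B, A \in H -> B \in H ->
    [|| A \subset B, B \subset A | [disjoint A & B]];
  tree_split : forall A, A \in H -> (1 < #|A|)%N -> exists B C,
    [/\ B \in H, C \in H, B :|: C = A, [disjoint B & C] & (B != set0) && (C != set0)]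
}.

Lemma tree_onP S H : reflect (tree_spec S H) (tree_on S H).
Proof.
apply: (iffP and5P) => [[r /forall_inP l ne /forall_inP s /andP[/forall_inP la /forall_inP b]]|].
  constructor=> // [A B hA hB|A hA h1]; first by move/forall_inP: (la A hA); apply.
  case/implyP/(_ h1)/exists_inP: (b A hA) => B hB /exists_inP [C hC].
  by case/and4P=> /eqP e d B0 C0; exists B, C; rewrite B0.
case=> r l ne s la b; split=> //; try exact/forall_inP.
apply/andP; split; apply/forall_inP => A hA.
  by apply/forall_inP => B hB; apply: la.
apply/implyP => h1; have [B [C [hB hC e d /andP[B0 C0]]]] := b A hA h1.
by apply/exists_inP; exists B => //; apply/exists_inP; exists C; rewrite ?e ?eqxx ?d ?B0 ?C0.
Qed.

Lemma is_phylo_tree_on H : is_phylo H = tree_on [set: 'I_n] H.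
Proof.
rewrite /is_phylo /tree_on; congr [&& _, _, _ & _].
  by apply/forallP/forall_inP => h i //; apply: h.
by rewrite (introT forall_inP (fun A _ => subsetT A)).
Qed.

Lemma tree_on_set1 x H : tree_on [set x] H = (H == [set [set x]]).
Proof.
apply/tree_onP/eqP => [[r _ ne s _ _]|->].
  apply/setP => D; rewrite inE; apply/idP/eqP => [hD|->//].
  by move: (s D hD); rewrite subset1 => /orP[/eqP|/eqP e] //; rewrite -e hD in ne.
split=> [|i||A|A B|A]; rewrite ?inE //.
- by move/eqP->.
- by apply/eqP => /setP/(_ x); rewrite !inE eqxx.
- by move/eqP->.
- by move=> /eqP-> /eqP->; rewrite subxx.
- by move/eqP->; rewrite cards1.
Qed.

Lemma depth_root S H : tree_on S H -> depth H S = 0%N.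
Proof.
move/tree_onP=> tH; apply/eqP; rewrite cards_eq0; apply/eqP/setP => D; rewrite !inE.
by apply/negP => /andP[/(tree_sub tH) sDS]; rewrite properE sDS andbF.
Qed.

Definition graft S H1 H2 := S |: (H1 :|: H2).
Definition subtree H A := [set D in H | D \subset A].

Section Graft.

Variables (S A : {set 'I_n}) (H1 H2 : {set {set 'I_n}}).
Hypotheses (tH1 : tree_on A H1) (tH2 : tree_on (S :\: A) H2).
Hypotheses (pAS : A \proper S) (A0 : A != set0).

Let t1 : tree_spec A H1 := elimT (tree_onP A H1) tH1.
Let t2 : tree_spec (S :\: A) H2 := elimT (tree_onP _ H2) tH2.
Let sAS : A \subset S := proper_sub pAS.

Let disjoint_setD : [disjoint A & S :\: A].
Proof. by rewrite -setI_eq0 setDE setICA setICr setI0. Qed.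

Lemma disjoint_clusters D E : D \in H1 -> E \in H2 -> [disjoint D & E].
Proof. by move=> hD hE; apply: disjointW (tree_sub t1 hD) (tree_sub t2 hE) disjoint_setD. Qed.

Let SA0 : S :\: A != set0.
Proof. by case/properP: pAS => _ [x xS xA]; apply/set0Pn; exists x; rewrite inE xA. Qed.

Lemma root_notin_left : S \notin H1.
Proof. by apply: contraL pAS => /(tree_sub t1); rewrite properE => ->; rewrite andbF. Qed.

Lemma root_notin_right : S \notin H2.
Proof.
apply: contraNN A0 => /(tree_sub t2); rewrite -subset0 => sSA.
by apply/subsetP => x xA; move: (subsetP sSA x (subsetP sAS x xA)); rewrite inE xA.
Qed.

Lemma disjoint_subtrees : [disjoint H1 & H2].
Proof.
apply/pred0P => D /=; apply/negP => /andP[hD1 hD2].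
move: (disjoint_clusters hD1 hD2); rewrite -setI_eq0 setIid => /eqP D0.
by move: (tree_set0 t1); rewrite -D0 hD1.
Qed.

Lemma graft_tree : tree_on S (graft S H1 H2).
Proof.
have [r1 l1 n1 s1 la1 b1] := t1; have [r2 l2 n2 s2 la2 b2] := t2.
have sub1 D : D \in H1 -> D \subset S by move/s1/subset_trans; apply.
have sub2 D : D \in H2 -> D \subset S by move/s2/subset_trans; apply; apply: subsetDl.
apply/tree_onP; split; rewrite /graft.
- by rewrite setU11.
- move=> i iS; rewrite !inE; case iA: (i \in A); first by rewrite l1 ?orbT.
  by rewrite l2 ?orbT // inE iA.
- rewrite !inE (negbTE n1) (negbTE n2) !orbF eq_sym.
  by apply: contraNneq A0 => S0; rewrite -subset0 -S0.
- by move=> D; rewrite !inE => /predU1P[->|/orP[/sub1|/sub2]].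
- move=> D E; rewrite !inE => /predU1P[->|/orP[hD|hD]] /predU1P[->|/orP[hE|hE]].
  + by rewrite subxx.
  + by rewrite (sub1 _ hE) orbT.
  + by rewrite (sub2 _ hE) orbT.
  + by rewrite (sub1 _ hD).
  + exact: la1.
  + by rewrite disjoint_clusters ?orbT.
  + by rewrite (sub2 _ hD).
  + by rewrite disjoint_sym disjoint_clusters ?orbT.
  + exact: la2.
- move=> D; rewrite !inE => /predU1P[->|/orP[hD|hD]] h1.
  + exists A, (S :\: A); rewrite !inE r1 r2 A0 SA0 !orbT.
    by rewrite -{2}(setID S A) (setIidPr sAS) disjoint_setD.
  + have [B [C [hB hC e d nz]]] := b1 D hD h1.
    by exists B, C; rewrite !inE hB hC !orbT.
  + have [B [C [hB hC e d nz]]] := b2 D hD h1.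
    by exists B, C; rewrite !inE hB hC !orbT.
Qed.

Let subset_both_eq0 D : D \subset A -> D \subset S :\: A -> D = set0.
Proof.
move=> sDA sDSA; apply/eqP; rewrite -subset0.
by rewrite -(setICr A) subsetI sDA (subset_trans sDSA) // setDE subsetIr.
Qed.

Lemma subtree_graftl : subtree (graft S H1 H2) A = H1.
Proof.
apply/setP => D; rewrite !inE; apply/idP/idP => [|hD1]; last first.
  by rewrite hD1 orbT (tree_sub t1).
case/andP=> /predU1P[->|/orP[//|hD2]] sDA; first by move: pAS; rewrite properE sDA andbF.
by move: (tree_set0 t2); rewrite -(subset_both_eq0 sDA (tree_sub t2 hD2)) hD2.
Qed.

Lemma subtree_graftr : subtree (graft S H1 H2) (S :\: A) = H2.
Proof.
apply/setP => D; rewrite !inE; apply/idP/idP => [|hD2]; last first.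
  by rewrite hD2 !orbT (tree_sub t2).
case/andP=> /predU1P[->|/orP[hD1|//]] sDSA.
  by move: A0; rewrite (subset_both_eq0 (subxx A) (subset_trans sAS sDSA)) eqxx.
by move: (tree_set0 t1); rewrite -(subset_both_eq0 (tree_sub t1 hD1) sDSA) hD1.
Qed.

Lemma depth_graftl X : X != set0 -> X \subset A ->
  depth (graft S H1 H2) X = (depth H1 X).+1.
Proof.
move=> X0 sXA; rewrite /depth.
have -> : [set D in graft S H1 H2 | X \proper D] = S |: [set D in H1 | X \proper D].
  apply/setP => D; rewrite !inE.
  case: (eqVneq D S) => [->|_] /=; first by rewrite (sub_proper_trans sXA pAS).
  rewrite andb_orl orb_idr // => /andP[hD2 /proper_sub sXD].
  by move: X0; rewrite (subset_both_eq0 sXA (subset_trans sXD (tree_sub t2 hD2))) eqxx.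
by rewrite cardsU1 inE (negbTE root_notin_left).
Qed.

Lemma lca_graftl i j : i \in A -> j \in A -> lca (graft S H1 H2) i j = lca H1 i j.
Proof.
move=> iA jA; apply/setP => x; apply/bigcapP/bigcapP => h D.
  by move=> /andP[hD ijD]; apply: h; rewrite !inE hD orbT.
rewrite !inE => /andP[/predU1P[->|/orP[hD|hD]] /andP[iD jD]].
- by apply: (subsetP sAS); apply: h; rewrite (tree_root t1) iA.
- by apply: h; rewrite hD iD.
- by move: (subsetP (tree_sub t2 hD) i iD); rewrite inE iA.
Qed.

Lemma lca_graft_split i j : i \in A -> j \in S :\: A -> lca (graft S H1 H2) i j = S.
Proof.
move=> iA jSA; have /setDP [jS jA] := jSA.
apply/setP => x; apply/bigcapP/idP => [|xS D]; first by apply; rewrite !inE eqxx (subsetP sAS).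
rewrite !inE => /andP[/predU1P[->//|/orP[hD|hD]] /andP[iD jD]].
- by move: (subsetP (tree_sub t1 hD) j jD) jA => ->.
- by move: (subsetP (tree_sub t2 hD) i iD); rewrite inE iA.
Qed.

Lemma coph_graftl i j : i \in A -> j \in A ->
  coph (graft S H1 H2) i j = (coph H1 i j).+1.
Proof.
move=> iA jA; rewrite /coph lca_graftl // depth_graftl //.
  by apply/set0Pn; exists i; apply/bigcapP => D /andP[_ /andP[]].
by apply/subsetP => x /bigcapP; apply; rewrite (tree_root t1) iA.
Qed.

Lemma coph_graft_split i j : i \in A -> j \in S :\: A -> coph (graft S H1 H2) i j = 0%N.
Proof.
by move=> iA jSA; rewrite /coph lca_graft_split // depth_root // graft_tree.
Qed.

End Graft.

Lemma subtree_tree S H A : tree_on S H -> A \in H -> tree_on A (subtree H A).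
Proof.
move=> /tree_onP [r l ne s la b] hA; apply/tree_onP; split.
- by rewrite inE hA subxx.
- by move=> i iA; rewrite inE sub1set iA andbT l // (subsetP (s _ hA)).
- by rewrite inE negb_and ne.
- by move=> D; rewrite inE => /andP[].
- by move=> D E; rewrite !inE => /andP[hD _] /andP[hE _]; apply: la.
- move=> D; rewrite inE => /andP[hD sDA] h1; have [B [C [hB hC e d nz]]] := b D hD h1.
  exists B, C; rewrite !inE hB hC -e in sDA *; split=> //.
  + by apply: subset_trans sDA; apply: subsetUl.
  + by apply: subset_trans sDA; apply: subsetUr.
Qed.

Lemma graft_subtree S H A : tree_on S H -> A \in H -> S :\: A \in H ->
  H = graft S (subtree H A) (subtree H (S :\: A)).
Proof.
move=> /tree_onP [r l ne s la b] hA hSA.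
apply/setP => D; rewrite !inE; apply/idP/idP => [hD|/predU1P[->//|]]; last first.
  by case/orP=> /andP[].
rewrite hD /=; case: (eqVneq D S) => //= nDS.
case/or3P: (la D A hD hA) => [->//|sAD|dDA]; last first.
  by rewrite subsetD (s _ hD) dDA orbT.
case/or3P: (la D _ hD hSA) => [sD|sD|dD].
- by rewrite sD orbT.
- case/eqP: nDS; apply/eqP; rewrite eqEsubset s //=.
  by rewrite -(setID S A) subUset (subset_trans (subsetIr _ _)) ?sD.
- apply/orP; left; apply/subsetP => x xD; apply/negPn/negP => xA.
  by move: (disjointFr dD xD); rewrite inE xA (subsetP (s _ hD)).
Qed.

Definition root_child S H i A :=
  [&& i \in A, A \proper S, A \in H & S :\: A \in H].

Lemma root_child_uniq S H i A B :
  tree_on S H -> root_child S H i A -> root_child S H i B -> A = B.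
Proof.
move=> /tree_onP [r l ne s la b].
wlog suff sAB : A B / root_child S H i A -> root_child S H i B -> A \subset B.
  by move=> cA cB; apply/eqP; rewrite eqEsubset !sAB.
move=> /and4P[iA pA hA hSA] /and4P[iB pB hB hSB].
case/or3P: (la A B hA hB) => [//|sBA|dAB]; last by rewrite (disjointFr dAB iA) in iB.
case/or3P: (la A _ hA hSB) => [sA|sA|dA].
- by move: (subsetP sA i iA); rewrite inE iB.
- move: pA; rewrite properE => /andP[_]; apply: contraNT => _.
  by rewrite -(setID S B) subUset (subset_trans (subsetIr _ _)) ?sA.
- apply/subsetP => x xA; apply/negPn/negP => xB.
  by move: (disjointFr dA xA); rewrite inE xB (subsetP (s _ hA)).
Qed.

Lemma root_child_exists S H i : tree_on S H -> (1 < #|S|)%N -> i \in S ->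
  exists A, root_child S H i A.
Proof.
move=> /tree_onP [r l ne s la b] h1 iS.
have child B C : B \in H -> C \in H -> B :|: C = S -> [disjoint B & C] ->
    C != set0 -> i \in B -> root_child S H i B.
  move=> hB hC e d C0 iB; have eC : S :\: B = C.
    by rewrite -e setDUl setDv set0U; apply/setDidPl; rewrite disjoint_sym.
  rewrite /root_child iB hB eC hC properEneq -e subsetUl; apply/and4P; split=> //.
  by rewrite andbT; apply: contraNneq C0 => eB; rewrite -eC -e -eB setDv.
have [B [C [hB hC e d /andP[B0 C0]]]] := b S r h1.
case iB: (i \in B); first by exists B; apply: (child B C).
exists C; apply: (child C B); rewrite // 1?setUC 1?disjoint_sym //.
by move: iS; rewrite -e inE iB.
Qed.

Section SumsOverTrees.

Variable V : nmodType.

Lemma sum_graft S A (F : {set {set 'I_n}} -> V) : A \proper S -> A != set0 ->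
  \sum_(H1 | tree_on A H1) \sum_(H2 | tree_on (S :\: A) H2) F (graft S H1 H2) =
  \sum_(H | [&& tree_on S H, A \in H & S :\: A \in H]) F H.
Proof.
move=> pAS A0; rewrite pair_big_dep /=.
rewrite (reindex_onto (fun p => graft S p.1 p.2)
                      (fun H => (subtree H A, subtree H (S :\: A)))) /=; last first.
  by move=> H /and3P[tH hA hSA]; rewrite -graft_subtree.
apply: eq_bigl => -[H1 H2] /=; apply/idP/idP => [/andP[t1 t2]|].
  rewrite (graft_tree t1 t2 pAS A0) (subtree_graftl t1 t2 pAS).
  rewrite (subtree_graftr t1 t2 pAS A0) !eqxx !inE.
  by rewrite (tree_root (elimT (tree_onP _ _) t1)) (tree_root (elimT (tree_onP _ _) t2)) !orbT.
case/andP=> /and3P[tH hA hSA] /eqP [e1 e2].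
by move: (subtree_tree tH hA) (subtree_tree tH hSA); rewrite e1 e2 => -> ->.
Qed.

Lemma sum_tree_on S i (F : {set {set 'I_n}} -> V) : i \in S -> (1 < #|S|)%N ->
  \sum_(H | tree_on S H) F H =
  \sum_(A : {set 'I_n} | (i \in A) && (A \proper S))
     \sum_(H1 | tree_on A H1) \sum_(H2 | tree_on (S :\: A) H2) F (graft S H1 H2).
Proof.
move=> iS h1; under [RHS]eq_bigr => A /andP[iA pAS].
  rewrite sum_graft //; last by apply/set0Pn; exists i.
  over.
rewrite (exchange_big_dep (tree_on S)) /=; last by move=> A H _ /and3P[].
apply: eq_bigr => H tH; have [A0 cA0] := root_child_exists tH h1 iS.
rewrite (big_pred1 A0) // => A /=; rewrite tH; apply/idP/eqP => [|->].
  move=> /and4P[/andP[iA pAS] _ hA hSA]; apply: (root_child_uniq tH _ cA0).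
  by rewrite /root_child iA pAS hA.
by case/and4P: cA0 => -> -> -> ->.
Qed.

End SumsOverTrees.

End TreesOnLeafSets.

Section CountingSubsets.

Variables (T : finType) (V : nmodType).

Lemma sum_proper_subsets_by_card (Y : {set T}) (g : nat -> V) :
  \sum_(B : {set T} | B \proper Y) g #|B| = \sum_(k < #|Y|) g k *+ 'C(#|Y|, k).
Proof.
rewrite -(big_mkord xpredT (fun k => g k *+ 'C(#|Y|, k))).
transitivity (\sum_(B : {set T} | B \proper Y) \sum_(0 <= k < #|Y| | k == #|B|) g k).
  by apply: eq_bigr => B pBY; rewrite big_nat1_eq /= proper_card.
rewrite (exchange_big_dep xpredT) //=; apply: eq_big_nat => k /andP[_ kY].
rewrite -cards_draws -sumr_const; apply: eq_bigl => B; rewrite inE properEneq (eq_sym k).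
case: (eqVneq #|B| k) => [eBk|]; rewrite ?andbF ?andbT //; apply: andb_idl => _.
by apply: contraTneq kY => eBY; rewrite -eBk eBY ltnn.
Qed.

Lemma sum_supsets_by_card (X S : {set T}) (G : nat -> V) : X \subset S ->
  \sum_(A : {set T} | (X \subset A) && (A \proper S)) G #|A| =
  \sum_(k < #|S| - #|X|) G (k + #|X|)%N *+ 'C(#|S| - #|X|, k).
Proof.
move=> sXS; rewrite -cardsDS // -(sum_proper_subsets_by_card _ (fun k => G (k + #|X|)%N)).
rewrite (reindex_onto (fun B => X :|: B) (fun A => A :\: X)) /=; last first.
  by move=> A /andP[sXA _]; rewrite -{2}(setID A X) (setIidPr sXA) setUC.
apply: eq_big => [B|B /andP[_ /eqP]]; rewrite setDUl setDv set0U; last first.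
  move/setDidPl=> dBX.
  by rewrite cardsU setIC (disjoint_setI0 dBX) cards0 subn0 addnC.
have -> : (B :\: X == B) = [disjoint B & X] by apply/eqP/setDidPl.
case: (boolP [disjoint B & X]) => dBX; last first.
  by rewrite andbF; apply/esym/negbTE; apply: contra dBX => /proper_sub; rewrite subsetD => /andP[].
rewrite subsetUl andbT !properEneq subUset sXS subsetD dBX /= andbT.
apply: andb_id2r => _; congr negb; apply/eqP/eqP => [<-|->].
  by rewrite setDUl setDv set0U; apply/esym/setDidPl.
by rewrite -{2}(setID S X) (setIidPr sXS).
Qed.

End CountingSubsets.

Section YuleWeights.

Variables (R : rcfType) (n : nat).
Implicit Types (S A : {set 'I_n}) (H : {set {set 'I_n}}) (i j : 'I_n).

Definition yule_on S H : R :=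
  (2 ^ (#|S| - 1))%:R / (#|S|`!)%:R * \prod_(C in H | (1 < #|C|)%N) ((#|C| - 1)%:R)^-1.

(* The Yule probability that a given [a]-subset of an [s]-leaf set is a child of the root. *)
Definition yule_split a s : R := 2 * (a`!)%:R * ((s - a)`!)%:R / ((s`!)%:R * (s - 1)%:R).

Lemma yule_on_graft S A H1 H2 :
  tree_on A H1 -> tree_on (S :\: A) H2 -> A \proper S -> A != set0 ->
  yule_on S (graft S H1 H2) = yule_split #|A| #|S| * yule_on A H1 * yule_on (S :\: A) H2.
Proof.
move=> t1 t2 pAS A0; set f := fun C : {set 'I_n} => ((#|C| - 1)%:R : R)^-1.
have a1 : (0 < #|A|)%N by rewrite card_gt0.
have aS := proper_card pAS.
have eP : \prod_(C in graft S H1 H2 | (1 < #|C|)%N) f C =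
          f S * ((\prod_(C in H1 | (1 < #|C|)%N) f C) * \prod_(C in H2 | (1 < #|C|)%N) f C).
  rewrite big_mkcondr big_setU1 /=; last first.
    by rewrite inE negb_or (root_notin_left t1 pAS) (root_notin_right t2 pAS A0).
  rewrite ifT; last by apply: leq_trans aS; rewrite ltnS.
  rewrite (eq_bigl [predU H1 & H2]) => [|C]; last by rewrite !inE.
  by rewrite bigU /= -?big_mkcondr // (disjoint_subtrees t1 t2).
rewrite /yule_on eP (cardsDS (proper_sub pAS)) /f /yule_split.
set a := #|A|; set s := #|S|.
have -> : (2 ^ (s - 1) = 2 * 2 ^ (a - 1) * 2 ^ (s - a - 1))%N.
  by rewrite -expnS -expnD; congr (2 ^ _)%N; lia.
have s1 : (s - 1)%:R != 0 :> R by rewrite pnatr_eq0; lia.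
have fact0 k : (k`!)%:R != 0 :> R by rewrite pnatr_eq0 -lt0n fact_gt0.
by rewrite !natrM; field; rewrite !fact0 s1.
Qed.

Definition yule_mass S : R := \sum_(H | tree_on S H) yule_on S H.

Definition coph_moment S i j k : R :=
  \sum_(H | tree_on S H) yule_on S H * (coph H i j)%:R ^+ k.

Lemma yule_on_set1 x : yule_on [set x] [set [set x]] = 1.
Proof.
rewrite /yule_on cards1 big1 ?mulr1 ?divr1 // => C /andP[].
by rewrite inE => /eqP->; rewrite cards1.
Qed.

Lemma yule_mass_set1 x : yule_mass [set x] = 1.
Proof.
rewrite /yule_mass (big_pred1 [set [set x]]) ?yule_on_set1 // => H.
by rewrite /= tree_on_set1.
Qed.

Lemma coph_moment_set1 x k : coph_moment [set x] x x k = (k == 0%N)%:R.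
Proof.
rewrite /coph_moment /coph (big_pred1 [set [set x]]) => [|H]; last by rewrite /= tree_on_set1.
have -> : lca [set [set x]] x x = [set x].
  apply/setP => y; apply/bigcapP/idP => [/(_ [set x])|yx D].
    by apply; rewrite !inE !eqxx.
  by case/and3P; rewrite inE => /eqP->.
by rewrite depth_root ?tree_on_set1 // yule_on_set1 mul1r expr0n.
Qed.

Lemma coph_moment_succ1 S i j :
  \sum_(H | tree_on S H) yule_on S H * (coph H i j).+1%:R ^+ 1 =
  coph_moment S i j 1 + yule_mass S.
Proof.
by rewrite -big_split; apply: eq_bigr => H _; rewrite !expr1 -addn1 natrD mulrDr mulr1.
Qed.

Lemma coph_moment_succ2 S i j :
  \sum_(H | tree_on S H) yule_on S H * (coph H i j).+1%:R ^+ 2 =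
  coph_moment S i j 2 + 2 * coph_moment S i j 1 + yule_mass S.
Proof.
rewrite mulr_sumr -!big_split; apply: eq_bigr => H _ /=.
by rewrite -addn1 natrD; ring.
Qed.

Lemma sum_tree_on_coph S i j (g : nat -> R) : i \in S -> j \in S -> (1 < #|S|)%N ->
  \sum_(H | tree_on S H) yule_on S H * g (coph H i j) =
  \sum_(A : {set 'I_n} | (i \in A) && (A \proper S)) yule_split #|A| #|S| *
     (if j \in A then (\sum_(H1 | tree_on A H1) yule_on A H1 * g (coph H1 i j).+1)
                        * yule_mass (S :\: A)
      else yule_mass A * yule_mass (S :\: A) * g 0%N).
Proof.
move=> iS jS h1; rewrite (sum_tree_on _ iS h1); apply: eq_bigr => A /andP[iA pAS].
have A0 : A != set0 by apply/set0Pn; exists i.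
rewrite /yule_mass; case: ifP => jA.
  rewrite big_distrl mulr_sumr; apply: eq_bigr => H1 t1.
  rewrite /= !mulr_sumr; apply: eq_bigr => H2 t2.
  by rewrite (yule_on_graft t1 t2 pAS A0) (coph_graftl t1 t2 pAS iA jA); ring.
have jSA : j \in S :\: A by rewrite inE jA.
rewrite !big_distrl mulr_sumr; apply: eq_bigr => H1 t1.
rewrite /= mulr_sumr big_distrl mulr_sumr; apply: eq_bigr => H2 t2 /=.
by rewrite (yule_on_graft t1 t2 pAS A0) (coph_graft_split t1 t2 pAS A0 iA jSA); ring.
Qed.

End YuleWeights.

Lemma natrS_neq0 (R : numDomainType) m : m%:R + 1 != 0 :> R.
Proof. by rewrite natr1 pnatr_eq0. Qed.

Lemma natrSS_neq0 (R : numDomainType) m : m%:R + 1 + 1 != 0 :> R.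
Proof. by rewrite !natr1 pnatr_eq0. Qed.

Lemma natr_add2_neq0 (R : numDomainType) m : m%:R + 2 != 0 :> R.
Proof. by rewrite -natrD pnatr_eq0 addn2. Qed.

Section ClosedForms.

Variable R : rcfType.
Implicit Types (m s : nat).

Definition harmonic2 s : R := \sum_(1 <= i < s.+1) (i%:R)^-2.

Lemma harmonicS m : harmonic R m.+1 = harmonic R m + (m%:R + 1)^-1.
Proof. by rewrite /harmonic big_nat_recr //= natr1. Qed.

Lemma harmonic2S m : harmonic2 m.+1 = harmonic2 m + (m%:R + 1)^-2.
Proof. by rewrite /harmonic2 big_nat_recr //= natr1. Qed.

Lemma harmonic0 : harmonic R 0 = 0.
Proof. by rewrite /harmonic big_geq. Qed.

Lemma harmonic20 : harmonic2 0 = 0.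
Proof. by rewrite /harmonic2 big_geq. Qed.

(* The first two Yule moments of the depth of a leaf and of the cophenetic value of two
   distinct leaves in a tree with [s] leaves; [coph_mean] and [coph_sqmean] are junk at [s = 1]. *)
Definition depth_mean s : R := 2 * harmonic R s - 2.
Definition depth_sqmean s : R :=
  6 - 6 * harmonic R s + 4 * harmonic R s ^+ 2 - 4 * harmonic2 s.
Definition coph_mean s : R := 2 + (4 - 4 * harmonic R s) / (s%:R - 1).
Definition coph_sqmean s : R :=
  10 + (4 - 4 * harmonic R s - 8 * harmonic R s ^+ 2 + 8 * harmonic2 s) / (s%:R - 1).

(* In a Yule tree on [m + 2] leaves: the probability that the root child containing a
   given leaf has [k + 1] leaves, and that it contains two given leaves and has [k + 2]. *)
Definition child_size_diag m k : R := 2 * (k%:R + 1) / ((m%:R + 2) * (m%:R + 1)).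
Definition child_size_pair m k : R :=
  2 * (k%:R + 2) * (k%:R + 1) / ((m%:R + 2) * (m%:R + 1) ^+ 2).

Let sum_child_size_diag m (G : nat -> R) :
  \sum_(k < m.+1) child_size_diag m k * G k.+1 =
  (\sum_(k < m.+1) 2 * (k%:R + 1) * G k.+1) / ((m%:R + 2) * (m%:R + 1)).
Proof. by rewrite mulr_suml; apply: eq_bigr => k _; rewrite mulrAC. Qed.

Let sum_child_size_pair m (G : nat -> R) :
  \sum_(k < m) child_size_pair m k * G k.+2 =
  (\sum_(k < m) 2 * (k%:R + 2) * (k%:R + 1) * G k.+2) / ((m%:R + 2) * (m%:R + 1) ^+ 2).
Proof. by rewrite mulr_suml; apply: eq_bigr => k _; rewrite mulrAC. Qed.

Lemma child_size_diag_sum m : \sum_(k < m.+1) child_size_diag m k = 1.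
Proof.
have tel m' : \sum_(k < m') 2 * (k%:R + 1) * 1 = (m'%:R + 1) * m'%:R :> R.
  elim: m' => [|m' IH]; first by rewrite big_ord0 mulr0.
  by rewrite big_ord_recr /= IH -!natr1; ring.
under eq_bigr do rewrite -[child_size_diag _ _]mulr1.
rewrite (sum_child_size_diag m (fun=> 1)) tel -natr1.
by field; rewrite natrS_neq0 natr_add2_neq0.
Qed.

Lemma depth_mean_rec m :
  \sum_(k < m.+1) child_size_diag m k * (depth_mean k.+1 + 1) = depth_mean m.+2.
Proof.
have tel m' : \sum_(k < m') 2 * (k%:R + 1) * (depth_mean k.+1 + 1) =
              (m'%:R + 1) * m'%:R * depth_mean m'.+1.
  elim: m' => [|m' IH]; first by rewrite big_ord0 mulr0 mul0r.
  rewrite big_ord_recr /= IH /depth_mean !harmonicS -!natr1.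
  by field; rewrite natrS_neq0 natrSS_neq0.
rewrite (sum_child_size_diag m (fun k => depth_mean k + 1)) tel -natr1.
by field; rewrite natrS_neq0 natr_add2_neq0.
Qed.

Lemma depth_sqmean_rec m :
  \sum_(k < m.+1) child_size_diag m k * (depth_sqmean k.+1 + 2 * depth_mean k.+1 + 1) =
  depth_sqmean m.+2.
Proof.
have tel m' : \sum_(k < m') 2 * (k%:R + 1) * (depth_sqmean k.+1 + 2 * depth_mean k.+1 + 1) =
              (m'%:R + 1) * m'%:R * depth_sqmean m'.+1.
  elim: m' => [|m' IH]; first by rewrite big_ord0 mulr0 mul0r.
  rewrite big_ord_recr /= IH /depth_sqmean /depth_mean !harmonicS !harmonic2S -!natr1.
  by field; rewrite natrS_neq0 natrSS_neq0.
rewrite (sum_child_size_diag m (fun k => depth_sqmean k + 2 * depth_mean k + 1)) tel -natr1.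
by field; rewrite natrS_neq0 natr_add2_neq0.
Qed.

Lemma coph_mean_rec m :
  \sum_(k < m) child_size_pair m k * (coph_mean k.+2 + 1) = coph_mean m.+2.
Proof.
have cmS m' : coph_mean m'.+2 = 2 + (4 - 4 * harmonic R m'.+2) / (m'%:R + 1).
  by rewrite /coph_mean -[m'.+2]addn1 natrD addrK natr1.
have tel m' : \sum_(k < m') 2 * (k%:R + 2) * (k%:R + 1) * (coph_mean k.+2 + 1) =
              (m'%:R + 2) * (m'%:R + 1) ^+ 2 * coph_mean m'.+2.
  elim: m' => [|m' IH]; first by rewrite big_ord0 cmS !harmonicS harmonic0; field.
  rewrite big_ord_recr /= IH !cmS !harmonicS -!natr1.
  have := @natrSS_neq0 R m'.+1; rewrite -natr1 => h3.
  by field; rewrite natrS_neq0 natrSS_neq0 h3.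
rewrite (sum_child_size_pair m (fun k => coph_mean k + 1)) tel.
by field; rewrite natrS_neq0 natr_add2_neq0.
Qed.

Lemma coph_sqmean_rec m :
  \sum_(k < m) child_size_pair m k * (coph_sqmean k.+2 + 2 * coph_mean k.+2 + 1) =
  coph_sqmean m.+2.
Proof.
have cmS m' : coph_mean m'.+2 = 2 + (4 - 4 * harmonic R m'.+2) / (m'%:R + 1).
  by rewrite /coph_mean -[m'.+2]addn1 natrD addrK natr1.
have csS m' : coph_sqmean m'.+2 = 10 + (4 - 4 * harmonic R m'.+2 - 8 * harmonic R m'.+2 ^+ 2
                                        + 8 * harmonic2 m'.+2) / (m'%:R + 1).
  by rewrite /coph_sqmean -[m'.+2]addn1 natrD addrK natr1.
have tel m' : \sum_(k < m') 2 * (k%:R + 2) * (k%:R + 1) *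
                (coph_sqmean k.+2 + 2 * coph_mean k.+2 + 1) =
              (m'%:R + 2) * (m'%:R + 1) ^+ 2 * coph_sqmean m'.+2.
  elim: m' => [|m' IH].
    by rewrite big_ord0 csS !harmonicS !harmonic2S harmonic0 harmonic20; field.
  rewrite big_ord_recr /= IH !cmS !csS !harmonicS !harmonic2S -!natr1.
  have := @natrSS_neq0 R m'.+1; rewrite -natr1 => h3.
  by field; rewrite natrS_neq0 natrSS_neq0 h3.
rewrite (sum_child_size_pair m (fun k => coph_sqmean k + 2 * coph_mean k + 1)) tel.
by field; rewrite natrS_neq0 natr_add2_neq0.
Qed.

End ClosedForms.

Section ChildSizes.

Variables (R : rcfType) (n : nat).

Let fact_neq0 k : (k`!)%:R != 0 :> R.
Proof. by rewrite pnatr_eq0 -lt0n fact_gt0. Qed.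

Let natr_bin m k : (k <= m)%N ->
  'C(m, k)%:R = (m`!)%:R / ((k`!)%:R * ((m - k)`!)%:R) :> R.
Proof. by move=> km; rewrite -(bin_fact km) !natrM; field; rewrite !fact_neq0. Qed.

Lemma yule_split_binomial_diag m k : (k <= m)%N ->
  yule_split R k.+1 m.+2 *+ 'C(m.+1, k) = child_size_diag R m k.
Proof.
move=> km; rewrite -mulr_natl natr_bin ?leqW // /yule_split /child_size_diag.
have -> : (m.+2 - k.+1 = m.+1 - k)%N by lia.
have -> : (m.+2 - 1 = m.+1)%N by lia.
rewrite (factS m.+1) (factS k) !natrM -[m.+2%:R]natr1 -[k.+1%:R]natr1 -[m.+1%:R]natr1.
by field; rewrite !fact_neq0 natrS_neq0 natr_add2_neq0.
Qed.

Lemma yule_split_binomial_pair m k : (k <= m)%N ->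
  yule_split R k.+2 m.+2 *+ 'C(m, k) = child_size_pair R m k.
Proof.
move=> km; rewrite -mulr_natl natr_bin // /yule_split /child_size_pair.
have -> : (m.+2 - k.+2 = m - k)%N by lia.
have -> : (m.+2 - 1 = m.+1)%N by lia.
rewrite (factS m.+1) (factS m) (factS k.+1) (factS k) !natrM.
rewrite -[m.+2%:R]natr1 -[k.+2%:R]natr1 -[k.+1%:R]natr1 -[m.+1%:R]natr1.
by field; rewrite !fact_neq0 natrS_neq0 natr_add2_neq0.
Qed.

Implicit Types (S A : {set 'I_n}) (i j : 'I_n).

Lemma sum_child_diag S i m (G : nat -> R) : i \in S -> #|S| = m.+2 ->
  \sum_(A : {set 'I_n} | (i \in A) && (A \proper S)) yule_split R #|A| #|S| * G #|A| =
  \sum_(k < m.+1) child_size_diag R m k * G k.+1.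
Proof.
move=> iS cS; under eq_bigl do rewrite -sub1set.
rewrite (sum_supsets_by_card (fun a => yule_split R a #|S| * G a)) ?sub1set // cards1 cS.
apply: eq_bigr => k _; rewrite addn1 -mulrnAl yule_split_binomial_diag //.
by have := ltn_ord k; lia.
Qed.

Lemma sum_child_pair S i j m (G : nat -> R) : i \in S -> j \in S -> i != j -> #|S| = m.+2 ->
  \sum_(A : {set 'I_n} | (i \in A) && (A \proper S) && (j \in A)) yule_split R #|A| #|S| * G #|A| =
  \sum_(k < m) child_size_pair R m k * G k.+2.
Proof.
move=> iS jS ij cS.
rewrite (eq_bigl (fun A => ([set i; j] \subset A) && (A \proper S))) => [|A]; last first.
  by rewrite subUset !sub1set andbAC.
rewrite (sum_supsets_by_card (fun a => yule_split R a #|S| * G a)); last first.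
  by rewrite subUset !sub1set iS jS.
rewrite cards2 ij cS (_ : m.+2 - 2 = m)%N; last by lia.
by apply: eq_bigr => k _; rewrite addn2 -mulrnAl yule_split_binomial_pair // ltnW.
Qed.

End ChildSizes.

Section YuleMoments.

Variables (R : rcfType) (n : nat).
Implicit Types (S A : {set 'I_n}) (i j : 'I_n).

Definition moments_closed_form S : Prop :=
  [/\ yule_mass R S = 1,
      forall i, i \in S ->
        coph_moment R S i i 1 = depth_mean R #|S| /\ coph_moment R S i i 2 = depth_sqmean R #|S|
    & forall i j, i \in S -> j \in S -> i != j ->
        coph_moment R S i j 1 = coph_mean R #|S| /\ coph_moment R S i j 2 = coph_sqmean R #|S|].

Lemma moments_closed_form_set1 x : moments_closed_form [set x].
Proof.
split=> [|i|i j]; rewrite ?yule_mass_set1 ?cards1 //; last first.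
  by rewrite !inE => /eqP-> /eqP->; rewrite eqxx.
rewrite inE => /eqP->; rewrite !coph_moment_set1 /depth_mean /depth_sqmean.
by rewrite /harmonic /harmonic2 !big_nat1 invr1 expr1n divr1 /=; split; ring.
Qed.

Section Step.

Variables (m : nat) (S : {set 'I_n}).
Hypothesis cS : #|S| = m.+2.
Hypothesis IH : forall A, A != set0 -> A \proper S -> moments_closed_form A.

Let closed_parts A k : k \in A -> A \proper S ->
  moments_closed_form A /\ moments_closed_form (S :\: A).
Proof.
move=> kA pAS; split; apply: IH => //; first by apply/set0Pn; exists k.
- by case/properP: pAS => _ [x xS xA]; apply/set0Pn; exists x; rewrite inE xA.
- have kS := subsetP (proper_sub pAS) k kA.
  by rewrite properEneq subsetDl andbT; apply: contraTneq kS => <-; rewrite inE kA.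
Qed.

Let card_gt1 : (1 < #|S|)%N. Proof. by rewrite cS. Qed.

Lemma moment_diag_step i (g : nat -> R) (G : nat -> R) : i \in S ->
  (forall A, i \in A -> A \proper S ->
     \sum_(H1 | tree_on A H1) yule_on R A H1 * g (coph H1 i i).+1 = G #|A|) ->
  \sum_(H | tree_on S H) yule_on R S H * g (coph H i i) =
  \sum_(k < m.+1) child_size_diag R m k * G k.+1.
Proof.
move=> iS hG; rewrite (sum_tree_on_coph g iS iS card_gt1) -(sum_child_diag G iS cS).
apply: eq_bigr => A /andP[iA pAS]; rewrite iA hG //.
by have [_ [-> _ _]] := closed_parts iA pAS; rewrite mulr1.
Qed.

Lemma moment_pair_step i j (g : nat -> R) (G : nat -> R) :
  i \in S -> j \in S -> i != j -> g 0%N = 0 ->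
  (forall A, i \in A -> j \in A -> A \proper S ->
     \sum_(H1 | tree_on A H1) yule_on R A H1 * g (coph H1 i j).+1 = G #|A|) ->
  \sum_(H | tree_on S H) yule_on R S H * g (coph H i j) =
  \sum_(k < m) child_size_pair R m k * G k.+2.
Proof.
move=> iS jS ij g0 hG; rewrite (sum_tree_on_coph g iS jS card_gt1).
rewrite -(sum_child_pair G iS jS ij cS).
rewrite [RHS]big_mkcondr; apply: eq_bigr => A /andP[iA pAS].
case: ifP => jA; last by rewrite g0 !mulr0.
by rewrite hG //; have [_ [-> _ _]] := closed_parts iA pAS; rewrite mulr1.
Qed.

Lemma moments_closed_form_step : moments_closed_form S.
Proof.
have [i0 i0S] : exists i0, i0 \in S by apply/set0Pn; rewrite -card_gt0 cS.
split=> [|i iS|i j iS jS ij]; rewrite ?cS.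
- transitivity (\sum_(k < m.+1) child_size_diag R m k * (fun=> 1 : R) k.+1); last first.
    by under eq_bigr do rewrite mulr1; apply: child_size_diag_sum.
  rewrite -(@moment_diag_step i0 (fun=> 1) (fun=> 1) i0S) => [|A iA pAS] /=.
    by apply: eq_bigr => H _; rewrite mulr1.
  have [[ZA _ _] _] := closed_parts iA pAS.
  by rewrite -[RHS]ZA; apply: eq_bigr => H _; rewrite mulr1.
- rewrite -depth_mean_rec -depth_sqmean_rec; split.
  + apply: (moment_diag_step (g := fun c => c%:R ^+ 1) (G := fun a => depth_mean R a + 1)) => //.
    move=> A iA pAS; have [[ZA EA _] _] := closed_parts iA pAS; have [E1 _] := EA i iA.
    by rewrite coph_moment_succ1 E1 ZA.
  + apply: (moment_diag_step (g := fun c => c%:R ^+ 2)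
             (G := fun a => depth_sqmean R a + 2 * depth_mean R a + 1)) => //.
    move=> A iA pAS; have [[ZA EA _] _] := closed_parts iA pAS; have [E1 E2] := EA i iA.
    by rewrite coph_moment_succ2 E1 E2 ZA.
- rewrite -coph_mean_rec -coph_sqmean_rec; split.
  + apply: (moment_pair_step (g := fun c => c%:R ^+ 1) (G := fun a => coph_mean R a + 1)) => //.
    move=> A iA jA pAS; have [[ZA _ FA] _] := closed_parts iA pAS; have [F1 _] := FA i j iA jA ij.
    by rewrite coph_moment_succ1 F1 ZA.
  + apply: (moment_pair_step (g := fun c => c%:R ^+ 2)
             (G := fun a => coph_sqmean R a + 2 * coph_mean R a + 1)) => //=.
      by rewrite expr0n.
    move=> A iA jA pAS; have [[ZA _ FA] _] := closed_parts iA pAS; have [F1 F2] := FA i j iA jA ij.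
    by rewrite coph_moment_succ2 F1 F2 ZA.
Qed.

End Step.

Lemma yule_moments S : S != set0 -> moments_closed_form S.
Proof.
have [N] := ubnP #|S|; elim: N S => // N IHN S leSN S0.
case: (ltnP 1 #|S|) => [h1|]; last first.
  rewrite leq_eqVlt ltnS leqn0 cards_eq0 (negbTE S0) orbF => /cards1P [x ->].
  exact: moments_closed_form_set1.
have cS : #|S| = (#|S| - 2).+2 by lia.
apply: (moments_closed_form_step cS) => A A0 pAS; apply: IHN => //.
by apply: leq_trans (proper_card pAS) _; rewrite -ltnS.
Qed.

End YuleMoments.

Lemma sum_ord_subnS n : (\sum_(i < n) (n - i.+1) = 'C(n, 2))%N.
Proof.
elim: n => [|n IH]; first by rewrite big_ord0.
by rewrite big_ord_recl subn1 /= binS bin1 -IH addnC; congr (_ + _)%N; apply: eq_bigr.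
Qed.

Lemma natr_bin2 (R : numFieldType) n : 'C(n, 2)%:R = n%:R * (n%:R - 1) / 2 :> R.
Proof.
have e : ('C(n, 2) * 2 = n * n.-1)%N.
  elim: n => [|n IH] //; rewrite binS bin1 mulnDl IH; case: n {IH} => // n; nia.
have two0 : (2 : R) != 0 by rewrite pnatr_eq0.
apply: (mulIf two0); rewrite divfK // -natrM e.
by case: n {e} => [|n]; rewrite ?mul0r // natrM -natr1 addrK.
Qed.

Lemma card_ord_gt n (i : 'I_n) : #|[pred j : 'I_n | (i < j)%N]| = (n - i.+1)%N.
Proof.
rewrite -sum1_card -(big_mkord (fun j => i < j)%N (fun=> 1%N)).
rewrite (big_cat_nat _ (n := i.+1)) //= 1?ltnW //.
rewrite big_nat_cond big1 => [|j /andP[/andP[_ ji] ij]]; last by move: ij; rewrite ltnNge -ltnS ji.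
rewrite (congr_big_nat i.+1 n xpredT (fun _ => 1%N)) //; last by move=> j /andP[].
by rewrite sum_nat_const_nat muln1.
Qed.

Lemma sum_upper_triangle (V : nmodType) n (f : 'I_n -> 'I_n -> V) a b :
  (forall i, f i i = a) -> (forall i j, i != j -> f i j = b) ->
  \sum_(i < n) \sum_(j < n | (i <= j)%N) f i j = a *+ n + b *+ 'C(n, 2).
Proof.
move=> fa fb; transitivity (\sum_(i < n) (a + b *+ (n - i.+1))).
  apply: eq_bigr => i _; rewrite (bigD1 i) ?leqnn //= fa -card_ord_gt -sumr_const.
  congr (_ + _); apply: eq_big => [j|j /andP[_ ji]]; last by rewrite fb // eq_sym.
  by rewrite inE ltn_neqAle andbC eq_sym.
by rewrite big_split sumr_const card_ord sumrMnr sum_ord_subnS.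
Qed.

Lemma sum_sqr_sub (R : comPzRingType) (T : finType) (P : pred T) (p a : T -> R) :
  \sum_(x | P x) \sum_(y | P y) p x * p y * (a x - a y) ^+ 2 =
  2 * (\sum_(x | P x) p x) * (\sum_(x | P x) p x * a x ^+ 2)
  - 2 * (\sum_(x | P x) p x * a x) ^+ 2.
Proof.
have pair_prod (f g : T -> R) :
    \sum_(x | P x) \sum_(y | P y) f x * g y = (\sum_(x | P x) f x) * \sum_(y | P y) g y.
  by rewrite big_distrl; apply: eq_bigr => x _; rewrite big_distrr.
transitivity (\sum_(x | P x) \sum_(y | P y)
   (p x * a x ^+ 2 * p y - 2 * (p x * a x) * (p y * a y) + p x * (p y * a y ^+ 2))).
  by apply: eq_bigr => x _; apply: eq_bigr => y _; ring.
under eq_bigr do rewrite !big_split /= sumrN.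
rewrite big_split big_split /= sumrN !pair_prod -mulr_sumr; ring.
Qed.

Section ExpectedDistance.

Variables (R : rcfType) (n : nat).

Lemma sum_phylo_trees (f : {set {set 'I_n}} -> R) :
  \sum_(T in phylo_trees n) yule R T * f T =
  \sum_(H | tree_on [set: 'I_n] H) yule_on R [set: 'I_n] H * f H.
Proof.
apply: eq_big => [H|H _]; first by rewrite inE is_phylo_tree_on.
by rewrite /yule /yule_on cardsT card_ord.
Qed.

Lemma EY_D2_sum_variances : EY_D2 R n =
  \sum_(i < n) \sum_(j < n | (i <= j)%N)
     (2 * yule_mass R [set: 'I_n] * coph_moment R [set: 'I_n] i j 2
      - 2 * coph_moment R [set: 'I_n] i j 1 ^+ 2).
Proof.
have dphi2_sqr T T' c : c * dphi2 R T T' ^+ 2 =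
    \sum_(i < n) \sum_(j < n | (i <= j)%N) c * ((coph T i j)%:R - (coph T' i j)%:R) ^+ 2.
  rewrite sqr_sqrtr; last by do 2!(apply: sumr_ge0 => ? _); apply: sqr_ge0.
  by rewrite mulr_sumr; apply: eq_bigr => i _; rewrite mulr_sumr.
have yule_phylo_mass : \sum_(T in phylo_trees n) yule R T = yule_mass R [set: 'I_n].
  under eq_bigr do rewrite -[yule R _]mulr1.
  by rewrite (sum_phylo_trees (fun=> 1)); apply: eq_bigr => H _; rewrite mulr1.
rewrite /EY_D2; under eq_bigr => T _ do under eq_bigr => T' _ do rewrite dphi2_sqr.
under eq_bigr do rewrite exchange_big; rewrite exchange_big; apply: eq_bigr => i _.
under eq_bigr do rewrite exchange_big; rewrite exchange_big; apply: eq_bigr => j _.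
rewrite sum_sqr_sub yule_phylo_mass (sum_phylo_trees (fun T => (coph T i j)%:R)).
by rewrite (sum_phylo_trees (fun T => (coph T i j)%:R ^+ 2)).
Qed.

End ExpectedDistance.

Theorem theorem2 (R : rcfType) (n : nat) : (2 <= n)%N ->
  EY_D2 R n =
  (2 * n%:R) / (n%:R - 1) *
    (3 * n%:R ^+ 2 - 10 * n%:R - 1 + 8 * (n%:R + 1) * harmonic R n
     - 4 * (n%:R + 1) * harmonic R n ^+ 2).
Proof.
move=> n2; have setT0 : [set: 'I_n] != set0 by rewrite -card_gt0 cardsT card_ord; lia.
have [mass diag pair] := yule_moments R setT0; rewrite cardsT card_ord in diag pair.
rewrite EY_D2_sum_variances (@sum_upper_triangle _ _ _
  (2 * depth_sqmean R n - 2 * depth_mean R n ^+ 2)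
  (2 * coph_sqmean R n - 2 * coph_mean R n ^+ 2)).
- have n1 : n%:R - 1 != 0 :> R by rewrite -(subnK (ltnW n2)) natrD addrK pnatr_eq0; lia.
  rewrite -[_ *+ n]mulr_natr -[_ *+ 'C(n, 2)]mulr_natr natr_bin2.
  by rewrite /depth_sqmean /depth_mean /coph_sqmean /coph_mean; field; rewrite n1.
- by move=> i; have [-> ->] := diag i (in_setT i); rewrite mass mulr1.
- by move=> i j ij; have [-> ->] := pair i j (in_setT i) (in_setT j) ij; rewrite mass mulr1.
Qed.
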